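(* Let $A$ be an associative algebra (with identity) over a field $\mathbf{k}$, let $q\in A$ be an idempotent, let $(A,q):=\{x\in A\mid qxq=qx\}$, and fix $k\in\mathbf{k}$. Then $(A,q)$ is a (right) Leibniz algebra under the bracket $$\langle x,y\rangle_{4,k}:=xy-yx+yqx-xyq+kxqy-kqyx,\qquad x,y\in(A,q),$$ i.e. $\langle\langle x,y\rangle,z\rangle=\langle x,\langle y,z\rangle\rangle+\langle\langle x,z\rangle,y\rangle$ for all $x,y,z\in(A,q)$.
   Context: $(A,q)$ is the (right) invariant algebra induced by the idempotent $q$; it is a subalgebra of $A$. A (right) Leibniz algebra is a vector space with a bilinear operation $\langle\,,\,\rangle$ satisfying $\langle\langle x,y\rangle,z\rangle=\langle x,\langle y,z\rangle\rangle+\langle\langle x,z\rangle,y\rangle$. *)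

From mathcomp Require Import all_boot all_algebra.
Set Implicit Arguments. Unset Strict Implicit. Unset Printing Implicit Defensive.
Import GRing.Theory.
Local Open Scope ring_scope.

Definition inv_alg (F : fieldType) (A : algType F) (q : A) (x : A) : Prop :=
  q * x * q = q * x.

Definition bracket4 (F : fieldType) (A : algType F) (q : A) (k : F) (x y : A) : A :=
  x * y - y * x + y * q * x - x * y * q + k *: (x * q * y) - k *: (q * y * x).

From mathcomp Require Import all_boot all_algebra.
Set Implicit Arguments. Unset Strict Implicit. Unset Printing Implicit Defensive.
Import GRing.Theory.
Local Open Scope ring_scope.

(* The bracket is a commutator: <x, z> = [x, twist z] with
   twist z = z - z q + k q z.  For z in (A,q) and q idempotent, twist z
   commutes with q, so the inner derivation [_, twist z] commutes with twist;
   the Leibniz identity is then the Jacobi identity for commutators. *)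

Section InnerDerivation.
Variable R : pzRingType.

Definition adr (v a : R) : R := a * v - v * a.

Lemma adrD v a b : adr v (a + b) = adr v a + adr v b.
Proof. by rewrite /adr mulrDl mulrDr opprD addrACA. Qed.

Lemma adrN v a : adr v (- a) = - adr v a.
Proof. by rewrite /adr mulrN mulNr opprB opprK addrC. Qed.

Lemma adrB v a b : adr v (a - b) = adr v a - adr v b.
Proof. by rewrite adrD adrN. Qed.

Lemma adrM v a b : adr v (a * b) = adr v a * b + a * adr v b.
Proof.
rewrite /adr mulrBl mulrBr !mulrA addrA addrAC.
by rewrite [a * v * b - _ - _]addrAC subrr add0r addrC.
Qed.

Lemma adr_jacobi v u a : adr v (adr u a) = adr (adr v u) a + adr u (adr v a).
Proof.
rewrite -[adr u a]/(a * u - u * a) adrB !adrM (addrC (adr v u * a)).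
by rewrite opprD addrACA addrC.
Qed.

End InnerDerivation.

Lemma adrZ (R : pzRingType) (A : algType R) (v : A) c a :
  adr v (c *: a) = c *: adr v a.
Proof. by rewrite /adr scalerBr -scalerAl -scalerAr. Qed.

Section InvariantAlgebra.
Variables (F : fieldType) (A : algType F) (q : A) (k : F).
Hypothesis q_idem : q * q = q.

Lemma inv_alg_idem : inv_alg q q.
Proof. by rewrite /inv_alg !q_idem. Qed.

Lemma inv_algD x y : inv_alg q x -> inv_alg q y -> inv_alg q (x + y).
Proof. by rewrite /inv_alg => hx hy; rewrite mulrDr mulrDl hx hy. Qed.

Lemma inv_algN x : inv_alg q x -> inv_alg q (- x).
Proof. by rewrite /inv_alg => hx; rewrite mulrN mulNr hx. Qed.

Lemma inv_algZ c x : inv_alg q x -> inv_alg q (c *: x).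
Proof. by rewrite /inv_alg => hx; rewrite -scalerAr -scalerAl hx. Qed.

Lemma inv_algM x y : inv_alg q x -> inv_alg q y -> inv_alg q (x * y).
Proof.
rewrite /inv_alg => hx hy.
have -> : q * (x * y) * q = q * x * q * (y * q) by rewrite hx !mulrA.
by rewrite -(mulrA _ q) [q * (y * q)]mulrA hy !mulrA hx.
Qed.

Lemma inv_alg_bracket4 x y :
  inv_alg q x -> inv_alg q y -> inv_alg q (bracket4 q k x y).
Proof.
move=> hx hy; have hq := inv_alg_idem.
rewrite /bracket4.
by repeat (apply: inv_algD || apply: inv_algN || apply: inv_algZ || apply: inv_algM).
Qed.

Definition twist (z : A) : A := z - z * q + k *: (q * z).

Lemma bracket4_adr x z : bracket4 q k x z = adr (twist z) x.
Proof.
rewrite /bracket4 /adr /twist !mulrDr !mulrDl !mulrN !mulNr -?scalerAr -?scalerAl.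
rewrite !mulrA !opprD !opprK !addrA.
set a := x * z; set b := z * x; set c := z * q * x; set d := x * z * q.
set e := k *: (x * q * z); set f := k *: (q * z * x).
congr (_ - f).
by rewrite -!addrA; congr (a + _); rewrite addrA addrC -addrA.
Qed.

Lemma twist_comm z : inv_alg q z -> q * twist z = twist z * q.
Proof.
rewrite /inv_alg /twist => hz.
rewrite !mulrDr !mulrDl !mulrN !mulNr -?scalerAr -?scalerAl !mulrA.
by rewrite hz q_idem -(mulrA z q q) q_idem !subrr !add0r.
Qed.

Lemma adr_twist v b : q * v = v * q -> adr v (twist b) = twist (adr v b).
Proof.
move=> qv; have adr_q : adr v q = 0 by rewrite /adr qv subrr.
by rewrite /twist adrD adrB adrZ !adrM adr_q mulr0 mul0r addr0 add0r.
Qed.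

End InvariantAlgebra.

Theorem proposition1p3 (F : fieldType) (A : algType F) (q : A) (k : F) :
  q * q = q ->
  (forall x y, inv_alg q x -> inv_alg q y -> inv_alg q (bracket4 q k x y)) /\
  (forall x y z, inv_alg q x -> inv_alg q y -> inv_alg q z ->
     bracket4 q k (bracket4 q k x y) z =
     bracket4 q k x (bracket4 q k y z) + bracket4 q k (bracket4 q k x z) y).
Proof.
move=> q_idem; split; first exact: inv_alg_bracket4.
move=> x y z _ _ hz.
rewrite !bracket4_adr adr_jacobi adr_twist //.
exact: twist_comm.
Qed.
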